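(* Let $e$ be a directed edge of $\Gamma$ labeled $y$, not on $T$, from $g$ to $g'=gy$. Write $\gamma=\mathrm{nf}(g)=x^{i_n}y^{\epsilon_n}\cdots x^{i_1}y^{\epsilon_1}x^{i_0}$ (so $n\ge1$, $i_0\ge1$), let $s_k=i_k+i_{k-1}+\cdots+i_0$ for $0\le k\le n$, and let $m=\min\{k\mid s_k\le0\}$ if this set is nonempty, and $m=n$ otherwise. Then $m\ge1$ and: (1) If $m=n$ or $s_m\neq0$ or $\epsilon_{m+1}=1$, then $\gamma'=\mathrm{nf}(\gamma y)=x^{i_n}y^{\epsilon_n}\cdots x^{i_{m+1}}y^{\epsilon_{m+1}}x^{s_m}yx^{-s_{m-1}-1}y^{\epsilon_m}x^{i_{m-1}}y^{\epsilon_{m-1}}\cdots x^{i_1}y^{\epsilon_1}x^{i_0+1}$. (2) Otherwise, if $m<n$, $s_m=0$ and $\epsilon_{m+1}=-1$, then $\gamma'=\mathrm{nf}(\gamma y)=x^{i_n}y^{\epsilon_n}\cdots x^{i_{m+2}}y^{\epsilon_{m+2}}x^{i_{m+1}+i_m-1}y^{\epsilon_m}x^{i_{m-1}}y^{\epsilon_{m-1}}\cdots x^{i_1}y^{\epsilon_1}x^{i_0+1}$. In each case there is a sequence of $\Sigma$-rewritings from $\gamma y$ to $\gamma'$ in which no $y^{-1}$-rules are used and exactly $m$ $y$-rules are used, whose sizes, in the order used, are $s_0,s_1,\dots,s_{m-1}$.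
   Context: $F$ is Thompson's group with generators $x,y$, $A=\{x^{\pm1},y^{\pm1}\}$, $\Gamma$ its Cayley graph over $A$. Guba–Sapir's convergent rewriting system $\Sigma$ consists of free reductions $aa^{-1}\to\emptyset$ ($a\in A$), the $y$-rules of size $i$: $y^\epsilon x^iy\to x^iyx^{-i-1}y^\epsilon x^{i+1}$, and the $y^{-1}$-rules of size $i$: $y^\epsilon x^{i+1}y^{-1}\to x^{i+1}y^{-1}x^{-i}y^\epsilon x^i$ ($\epsilon\in\{1,-1\}$, $i\ge1$); rewriting may be applied to any subword. $\mathcal N$ is the set of $\Sigma$-irreducible words (unique normal forms for $F$), and $\mathrm{nf}(w)$ denotes the word of $\mathcal N$ representing the same element as $w$. $T$ is the subtree of $\Gamma$ whose non-backtracking paths from the identity are labeled exactly by the words of $\mathcal N$. *)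

From HB Require Import structures.
From mathcomp Require Import all_boot all_algebra.
Set Implicit Arguments. Unset Strict Implicit. Unset Printing Implicit Defensive.
Import GRing.Theory Num.Theory.
Local Open Scope ring_scope.

Inductive letter := X | Xi | Y | Yi.

Definition letter_eqb (a b : letter) : bool :=
  match a, b with
  | X, X | Xi, Xi | Y, Y | Yi, Yi => true | _, _ => false end.
Lemma letter_eqP : Equality.axiom letter_eqb.
Proof. by case; case; constructor. Qed.
HB.instance Definition _ := hasDecEq.Build letter letter_eqP.

Definition inv (a : letter) : letter :=
  match a with X => Xi | Xi => X | Y => Yi | Yi => Y end.

Definition word := seq letter.

Definition xpow (k : int) : word :=
  match k with Posz n => nseq n X | Negz n => nseq n.+1 Xi end.

(* y^eps, with eps = true meaning +1 and eps = false meaning -1 *)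
Definition ypow (e : bool) : letter := if e then Y else Yi.

(* ---------- Thompson's group F ----------
   F = < x, y | [x y^-1, x^-1 y x], [x y^-1, x^-2 y x^2] >,
   with [a,b] = a^-1 b^-1 a b. *)
Definition rel1 : word :=
  [:: Y; Xi] ++ [:: Xi; Yi; X] ++ [:: X; Yi] ++ [:: Xi; Y; X].
Definition rel2 : word :=
  [:: Y; Xi] ++ [:: Xi; Xi; Yi; X; X] ++ [:: X; Yi] ++ [:: Xi; Xi; Y; X; X].

Inductive fequiv : word -> word -> Prop :=
  | fe_free u v a : fequiv (u ++ [:: a; inv a] ++ v) (u ++ v)
  | fe_rel1 u v : fequiv (u ++ rel1 ++ v) (u ++ v)
  | fe_rel2 u v : fequiv (u ++ rel2 ++ v) (u ++ v)
  | fe_refl u : fequiv u u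
  | fe_sym u v : fequiv u v -> fequiv v u
  | fe_trans u v w : fequiv u v -> fequiv v w -> fequiv u w.

Inductive rule := Free | YRule of int | YinvRule of int.

Inductive rule_lr : rule -> word -> word -> Prop :=
  | lr_free a : rule_lr Free [:: a; inv a] [::]
  | lr_y (e : bool) (i : int) : 1 <= i ->
      rule_lr (YRule i) (ypow e :: xpow i ++ [:: Y])
              (xpow i ++ [:: Y] ++ xpow (- i - 1) ++ [:: ypow e] ++ xpow (i + 1))
  | lr_yinv (e : bool) (i : int) : 1 <= i ->
      rule_lr (YinvRule i) (ypow e :: xpow (i + 1) ++ [:: Yi])
              (xpow (i + 1) ++ [:: Yi] ++ xpow (- i) ++ [:: ypow e] ++ xpow i).

Inductive step : word -> rule -> word -> Prop :=
  | step_intro r l rh u v : rule_lr r l rh -> step (u ++ l ++ v) r (u ++ rh ++ v).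

Inductive derives : word -> seq rule -> word -> Prop :=
  | der_nil w : derives w [::] w
  | der_cons w r w' ls w'' : step w r w' -> derives w' ls w'' -> derives w (r :: ls) w''.

Definition irreducible (w : word) : Prop := forall r w', ~ step w r w'.

Definition is_nf (w v : word) : Prop := irreducible v /\ fequiv v w.

Definition yrule_sizes (ls : seq rule) : seq int :=
  pmap (fun r => if r is YRule k then Some k else None) ls.
Definition no_yinv_rule (ls : seq rule) : bool :=
  all (fun r => if r is YinvRule _ then false else true) ls.

(* ---------- the tree T ----------
   The edge of the Cayley graph from the element represented by g with label a
   lies on T iff some non-backtracking path from the identity labelled by a
   word w of N traverses it (in either direction): w = u ++ b :: v where the
   prefix u ends at g and b = a, or u ends at g a and b = a^-1. *)
Definition edge_on_T (g : word) (a : letter) : Prop :=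
  exists w u b v, irreducible w /\ w = u ++ b :: v /\
    ((fequiv u g /\ b = a) \/ (fequiv u (g ++ [:: a]) /\ b = inv a)).

(* W n a b = x^{a n} y^{b n} x^{a (n-1)} ... x^{a 1} y^{b 1} x^{a 0} *)
Definition W (n : nat) (a : nat -> int) (b : nat -> bool) : word :=
  xpow (a n) ++ flatten [seq ypow (b k) :: xpow (a k.-1) | k <- rev (iota 1 n)].

Definition psum (i : nat -> int) (k : nat) : int := \sum_(0 <= j < k.+1) i j.

Definition mindex (n : nat) (i : nat -> int) : nat :=
  head n [seq k <- iota 0 n.+1 | psum i k <= 0].

(* exponents/signs of the word in case (1):
   x^{i_n} y^{e_n} ... x^{i_{m+1}} y^{e_{m+1}} x^{s_m} y x^{-s_{m-1}-1}
     y^{e_m} x^{i_{m-1}} ... x^{i_1} y^{e_1} x^{i_0+1}   (n+1 y-letters) *)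
Definition a1 (n : nat) (i : nat -> int) (k : nat) : int :=
  let m := mindex n i in
  if k == 0%N then i 0%N + 1
  else if (k < m)%N then i k
  else if k == m then - psum i m.-1 - 1
  else if k == m.+1 then psum i m
  else i k.-1.
Definition b1 (n : nat) (i : nat -> int) (eps : nat -> bool) (k : nat) : bool :=
  let m := mindex n i in
  if (k <= m)%N then eps k else if k == m.+1 then true else eps k.-1.

(* exponents/signs of the word in case (2):
   x^{i_n} y^{e_n} ... x^{i_{m+2}} y^{e_{m+2}} x^{i_{m+1}+i_m-1}
     y^{e_m} x^{i_{m-1}} ... x^{i_1} y^{e_1} x^{i_0+1}   (n-1 y-letters) *)
Definition a2 (n : nat) (i : nat -> int) (k : nat) : int :=
  let m := mindex n i in
  if k == 0%N then i 0%N + 1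
  else if (k < m)%N then i k
  else if k == m then i m.+1 + i m - 1
  else i k.+1.
Definition b2 (n : nat) (i : nat -> int) (eps : nat -> bool) (k : nat) : bool :=
  let m := mindex n i in
  if (k <= m)%N then eps k else eps k.+1.

From Pilot Require Import Defs.
From mathcomp Require Import all_boot all_algebra zify.
From Stdlib Require Import Setoid Morphisms.
Import GRing.Theory Num.Theory.
Local Open Scope ring_scope.

(* While the
   partial sum s_k = i_k + ... + i_0 is positive, the subword
   y^(e_(k+1)) x^(s_k) y is the left-hand side of the y-rule of size s_k;
   applying it and merging adjacent powers of x moves the trailing y one
   syllable to the left, leaving x^(-s_k-1) y^(e_(k+1)) behind.
   At k = m the exponent s_m is no longer positive: either the word is now
   irreducible (case 1), or s_m = 0 and e_(m+1) = -1, and y^-1 y cancels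
   freely (case 2).  A word x^(a_n) y^(b_n) ... x^(a_0) is irreducible iff no
   subword y^(b_(k+1)) x^(a_k) y^(b_k) contains a left-hand side, so the
   irreducibility of the result is inherited from that of gamma.  The rules hold in F because
   the two relators yield all relations x_(k+1)^y = x_(k+2) of the infinite
   presentation.  That the edge is not on T only excludes gamma y being
   irreducible and gamma ending with y^-1, whence n >= 1 and i_0 >= 1. *)

Lemma nseqS_rcons (T : Type) k (c : T) : nseq k.+1 c = nseq k c ++ [:: c].
Proof. by rewrite -addn1 nseqD. Qed.

Lemma step_frame p q w r w' : step w r w' -> step (p ++ w ++ q) r (p ++ w' ++ q).
Proof.
case=> {}r l rh u v hl.
have E t : p ++ (u ++ t ++ v) ++ q = (p ++ u) ++ t ++ (v ++ q) by rewrite -!catA.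
by rewrite !E; constructor.
Qed.

Lemma derives_frame p q {w ls w'} :
  derives w ls w' -> derives (p ++ w ++ q) ls (p ++ w' ++ q).
Proof. by elim=> *; econstructor; eauto using step_frame. Qed.

Lemma derives_trans w ls w' ls' w'' :
  derives w ls w' -> derives w' ls' w'' -> derives w (ls ++ ls') w''.
Proof. by elim=> //= *; econstructor; eauto. Qed.

Definition yderives (w : word) (s : seq int) (w' : word) : Prop :=
  exists ls, [/\ derives w ls w', no_yinv_rule ls & yrule_sizes ls = s].

Lemma yderives_refl w : yderives w [::] w.
Proof. by exists [::]; split=> //; constructor. Qed.

Lemma yderives_trans {w s w' s' w''} :
  yderives w s w' -> yderives w' s' w'' -> yderives w (s ++ s') w''.
Proof.
case=> [ls [d1 n1 <-]] [ls' [d2 n2 <-]]; exists (ls ++ ls').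
split; first exact: derives_trans d2.
- by rewrite /no_yinv_rule all_cat -!/(no_yinv_rule _) n1 n2.
- exact: pmap_cat.
Qed.

Lemma yderives_frame p q {w s w'} :
  yderives w s w' -> yderives (p ++ w ++ q) s (p ++ w' ++ q).
Proof. by case=> ls [d *]; exists ls; split=> //; exact: derives_frame. Qed.

Lemma yderives_cancel u a v : yderives (u ++ [:: a, Defs.inv a & v]) [::] (u ++ v).
Proof.
exists [:: Free]; split=> //.
by econstructor; [exact: (step_intro u v (lr_free a)) | constructor].
Qed.

Lemma yderives_xpow_catX a : yderives (xpow a ++ [:: X]) [::] (xpow (a + 1)).
Proof.
case: a => [p|[|p]].
- by rewrite /= -nseqS_rcons addn1; exact: yderives_refl.
- by rewrite subrr /=; exact: (yderives_cancel [::] Xi [::]).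
- rewrite (_ : Negz p.+1 + 1 = Negz p); last by lia.
  have -> : xpow (Negz p.+1) = xpow (Negz p) ++ [:: Xi] by exact: nseqS_rcons.
  by have := (yderives_cancel (xpow (Negz p)) Xi [::]); rewrite cats0 -catA.
Qed.

Lemma yderives_xpow_catXi a : yderives (xpow a ++ [:: Xi]) [::] (xpow (a - 1)).
Proof.
case: a => [[|p]|p].
- exact: yderives_refl.
- rewrite (_ : Posz p.+1 - 1 = p); last by lia.
  have -> : xpow p.+1 = xpow p ++ [:: X] by exact: nseqS_rcons.
  by have := (yderives_cancel (xpow p) X [::]); rewrite cats0 -catA.
- rewrite (_ : Negz p - 1 = Negz p.+1); last by lia.
  by rewrite [xpow (Negz p.+1)]nseqS_rcons; exact: yderives_refl.
Qed.

Lemma yderives_xpow_cat a b : yderives (xpow a ++ xpow b) [::] (xpow (a + b)).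
Proof.
case: b => q; elim: q a => [|q IH] a.
- by rewrite cats0 addr0; exact: yderives_refl.
- have := yderives_trans (yderives_frame [::] (xpow q) (yderives_xpow_catX a)) (IH (a + 1)).
  by rewrite !cat0s -catA (_ : a + 1 + q = a + q.+1) //; lia.
- by rewrite (_ : a + Negz 0 = a - 1); [exact: yderives_xpow_catXi | lia].
- have := yderives_trans (yderives_frame [::] (xpow (Negz q)) (yderives_xpow_catXi a)) (IH (a - 1)).
  by rewrite !cat0s -catA (_ : a - 1 + Negz q = a + Negz q.+1) //; lia.
Qed.

Lemma yderives_xpow_cat_frame p q a b :
  yderives (p ++ xpow a ++ xpow b ++ q) [::] (p ++ xpow (a + b) ++ q).
Proof. by have := yderives_frame p q (yderives_xpow_cat a b); rewrite -catA. Qed.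

Lemma yderives_yrule_frame p q e s : 1 <= s ->
  yderives (p ++ ypow e :: xpow s ++ Y :: q) [:: s]
           (p ++ xpow s ++ Y :: xpow (- s - 1) ++ ypow e :: xpow (s + 1) ++ q).
Proof.
move=> hs; exists [:: YRule s]; split=> //.
apply: der_cons (der_nil _); have := step_intro p q (lr_y e hs).
by rewrite /= -!catA /= -catA.
Qed.

Lemma fequiv_frame p q {u v} : fequiv u v -> fequiv (p ++ u ++ q) (p ++ v ++ q).
Proof.
have E u' v' t : p ++ (u' ++ t ++ v') ++ q = (p ++ u') ++ t ++ (v' ++ q).
  by rewrite -!catA.
elim=> {u v} [u v a|u v|u v|u|u v _|u v w _ IH1 _ IH2].
- by rewrite E (E u v [::]); exact: fe_free.
- by rewrite E (E u v [::]); exact: fe_rel1.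
- by rewrite E (E u v [::]); exact: fe_rel2.
- exact: fe_refl.
- exact: fe_sym.
- exact: fe_trans IH1 IH2.
Qed.

#[local] Hint Resolve fe_refl : core.

#[local] Instance fequiv_Equivalence : Equivalence fequiv.
Proof. by split; [exact: fe_refl | exact: fe_sym | exact: fe_trans]. Qed.

#[local] Instance cat_fequiv_Proper : Proper (fequiv ==> fequiv ==> fequiv) (@cat letter).
Proof.
move=> u u' hu v v' hv; transitivity (u' ++ v).
- by have := fequiv_frame [::] v hu.
- by have := fequiv_frame u' [::] hv; rewrite !cats0.
Qed.

#[local] Instance cons_fequiv_Proper : Proper (eq ==> fequiv ==> fequiv) (@cons letter).
Proof. by move=> a _ <- v v' hv; have := fequiv_frame [:: a] [::] hv; rewrite !cats0. Qed.

Lemma fequiv_cancel a q : fequiv [:: a, Defs.inv a & q] q.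
Proof. exact: (fe_free [::] q a). Qed.

Lemma fequiv_cancel' a q : fequiv [:: Defs.inv a, a & q] q.
Proof. by have := fequiv_cancel (Defs.inv a) q; case: a. Qed.

Lemma fequiv_cancel_nseq k c q : fequiv (nseq k c ++ nseq k (Defs.inv c) ++ q) q.
Proof.
elim: k => [|k IH]; first reflexivity.
by rewrite nseqS_rcons -catA /= fequiv_cancel.
Qed.

Definition invw (w : word) : word := rev (map Defs.inv w).

Lemma invw_cancel w q : fequiv (w ++ invw w ++ q) q.
Proof.
elim: w q => [|a w IH] q /=; first reflexivity.
by rewrite /invw map_cons rev_cons -cats1 -/(invw w) -!catA IH; exact: fequiv_cancel.
Qed.

Lemma fequiv_rotate p q : fequiv (p ++ q) [::] -> fequiv (q ++ p) [::].
Proof.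
move=> h; transitivity ((q ++ p) ++ q ++ invw q ++ [::]); first by rewrite invw_cancel cats0.
by rewrite -!catA (catA p) h /= invw_cancel.
Qed.

(* Locked, so that rewriting with [catA] cannot unfold them. *)
Definition yconj k : word := locked (nseq k Xi ++ Y :: nseq k X).
Definition yiconj k : word := locked (nseq k Xi ++ Yi :: nseq k X).
Definition xconj (w : word) : word := Xi :: w ++ [:: X].

Lemma yconjE k : yconj k = nseq k Xi ++ Y :: nseq k X.
Proof. by rewrite /yconj -lock. Qed.

Lemma yiconjE k : yiconj k = nseq k Xi ++ Yi :: nseq k X.
Proof. by rewrite /yiconj -lock. Qed.

Lemma yconjK k q : fequiv (yconj k ++ yiconj k ++ q) q.
Proof.
rewrite yconjE yiconjE -!catA /= fequiv_cancel_nseq fequiv_cancel.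
exact: (fequiv_cancel_nseq k Xi).
Qed.

Lemma yiconjK k q : fequiv (yiconj k ++ yconj k ++ q) q.
Proof.
rewrite yconjE yiconjE -!catA /= fequiv_cancel_nseq fequiv_cancel.
exact: (fequiv_cancel_nseq k Xi).
Qed.

Lemma xconj_cat u v : fequiv (xconj (u ++ v)) (xconj u ++ xconj v).
Proof. by rewrite /xconj /= -!catA /= fequiv_cancel. Qed.

Lemma xconj_yconj k : xconj (yconj k) = yconj k.+1.
Proof. by rewrite /xconj !yconjE /= -catA /= -nseqS_rcons. Qed.

Lemma xconj_fequiv {a b c d} :
  fequiv (a ++ b) (c ++ d) -> fequiv (xconj a ++ xconj b) (xconj c ++ xconj d).
Proof. by move=> h; rewrite -!xconj_cat /xconj h. Qed.

(* With x_0 = x and x_1 = y, [yconj k] is the generator x_(k+1) = x^-k y x^k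
   of the infinite presentation of F, and [yconj_rel k] is its relation
   x_(k+1)^(x_1) = x_(k+2), valid for k >= 1. *)
Definition yconj_rel k := fequiv (yconj k ++ [:: Y]) (Y :: yconj k.+1).

Lemma yconj_rel_of_relator u k :
  fequiv (u ++ yiconj k ++ [:: Yi]) [::] -> fequiv u (Y :: yconj k).
Proof.
move=> h; transitivity ((u ++ yiconj k ++ [:: Yi]) ++ Y :: yconj k); last by rewrite h.
by rewrite -!catA /= (fequiv_cancel' Y) -[yconj k]cats0 yiconjK cats0.
Qed.

(* Rotating [rel1] (resp. [rel2]) to start at its 8th (resp. 10th) letter gives
   x_2 x_1 x_3^-1 x_1^-1 (resp. x_3 x_1 x_4^-1 x_1^-1). *)
Lemma yconj_rel1 : yconj_rel 1.
Proof.
apply: yconj_rel_of_relator; rewrite yconjE yiconjE.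
exact: (fequiv_rotate (take 7 rel1) (drop 7 rel1) (fe_rel1 [::] [::])).
Qed.

Lemma yconj_rel2 : yconj_rel 2.
Proof.
apply: yconj_rel_of_relator; rewrite yconjE yiconjE.
exact: (fequiv_rotate (take 9 rel2) (drop 9 rel2) (fe_rel2 [::] [::])).
Qed.

Lemma yconj_relY k q : yconj_rel k -> fequiv (yconj k ++ Y :: q) (Y :: yconj k.+1 ++ q).
Proof. by move=> h; rewrite -cat1s catA h. Qed.

Lemma yiconj_relY k q : yconj_rel k -> fequiv (yiconj k ++ Y :: q) (Y :: yiconj k.+1 ++ q).
Proof.
move=> h; transitivity (yiconj k ++ Y :: yconj k.+1 ++ yiconj k.+1 ++ q).
  by rewrite yconjK.
by rewrite -yconj_relY // yiconjK.
Qed.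

Lemma yconj_commute j t q : yconj_rel j ->
  fequiv (yconj (t + j) ++ yconj t ++ q) (yconj t ++ yconj (t + j).+1 ++ q).
Proof.
move=> h; suff e : fequiv (yconj (t + j) ++ yconj t) (yconj t ++ yconj (t + j).+1).
  by rewrite catA e -catA.
elim: t => [|t IH]; first by rewrite [yconj 0]yconjE.
by rewrite addSn; have := xconj_fequiv IH; rewrite !xconj_yconj.
Qed.

Lemma yconj_rel_step k : yconj_rel k.+1 -> yconj_rel k.+2 -> yconj_rel k.+3.
Proof.
move=> h1 h2; rewrite /yconj_rel.
transitivity (yiconj 1 ++ yconj 1 ++ yconj k.+3 ++ [:: Y]); first by rewrite yiconjK.
rewrite -(yconj_commute _ 1 [:: Y] h1) (yconj_relY _ [::] yconj_rel1) (yconj_relY _ _ h2).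
by rewrite (yiconj_relY _ _ yconj_rel1) (yconj_commute _ 2 [::] h1) yiconjK cats0.
Qed.

Lemma yconj_rel_all k : yconj_rel k.+1.
Proof.
suff : yconj_rel k.+1 /\ yconj_rel k.+2 by case.
elim: k => [|k [IH1 IH2]]; first by split; [exact: yconj_rel1 | exact: yconj_rel2].
by split=> //; exact: yconj_rel_step.
Qed.

Lemma yrule_fequiv {l rh k} : rule_lr (YRule k) l rh -> fequiv l rh.
Proof.
move Er : (YRule k) => r hr; case: hr Er => // e i hi _.
case: i hi => [[|k'] | //] _ //.
rewrite (_ : - Posz k'.+1 - 1 = Negz k'.+1); last by lia.
rewrite (_ : Posz k'.+1 + 1 = k'.+2); last by lia.
case: e.
- transitivity (xpow k'.+1 ++ yconj k'.+1 ++ [:: Y]).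
    by rewrite yconjE -!catA fequiv_cancel_nseq.
  by rewrite (yconj_relY _ [::] (yconj_rel_all k')) yconjE cats0.
- transitivity (xpow k'.+1 ++ yiconj k'.+1 ++ [:: Y]).
    by rewrite yiconjE -!catA fequiv_cancel_nseq.
  by rewrite (yiconj_relY _ [::] (yconj_rel_all k')) yiconjE cats0.
Qed.

Lemma yderives_fequiv {w s w'} : yderives w s w' -> fequiv w w'.
Proof.
case=> ls [d hls _]; elim: d hls => // {}w r w1 {}ls w2 [] {}r l rh u v hr _ IH.
case/andP=> hr_y /IH <-; apply: fequiv_frame.
case: hr hr_y => // [a _|e i hi _]; first exact: (fe_free [::] [::]).
exact: (yrule_fequiv (lr_y e hi)).
Qed.

Definition is_xletter (c : letter) : bool := (c == X) || (c == Xi).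
Definition no_x_head (t : word) : bool := if t is c :: _ then ~~ is_xletter c else true.

Lemma xpow_nseq c : exists n z, xpow c = nseq n z /\ is_xletter z.
Proof. by case: c => n; [exists n, X | exists n.+1, Xi]. Qed.

Lemma all_xletter_xpow c : all is_xletter (xpow c).
Proof. by have [n [z [-> hz]]] := xpow_nseq c; rewrite all_nseq hz orbT. Qed.

Lemma xpow_inj : injective xpow.
Proof.
case=> p [] q /=.
- by move/(congr1 size); rewrite !size_nseq => ->.
- by case: p.
- by case: q.
- by case=> /(congr1 size); rewrite !size_nseq => ->.
Qed.

Lemma xpow_cat_inj {c c' t t'} : xpow c ++ t = xpow c' ++ t' ->
  no_x_head t -> no_x_head t' -> c = c' /\ t = t'.
Proof.
move=> E ht ht'; suff [/xpow_inj -> ->] : xpow c = xpow c' /\ t = t' by [].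
move: E (all_xletter_xpow c) (all_xletter_xpow c').
elim: (xpow c) (xpow c') => [|a s IH] [|a' s'] //=.
- by move=> E _ /andP [ha _]; move: ht; rewrite E /= ha.
- by move=> E /andP [ha _]; move: ht'; rewrite -E /= ha.
- by case=> -> /IH h /andP [_ /h {}h] /andP [_ /h [-> ->]].
Qed.

Lemma irreducibleP w :
  irreducible w <-> forall u l v r rh, rule_lr r l rh -> w <> u ++ l ++ v.
Proof.
split=> [h u l v r rh hl E | h r w' hs].
  by apply: (h r (u ++ rh ++ v)); rewrite E; constructor.
by case: hs h => {}r l rh u v hl /(_ u l v r rh hl); apply.
Qed.

Definition lhs_prefix (w : word) : Prop := exists r l rh v, rule_lr r l rh /\ w = l ++ v.

Lemma lhs_prefixI {r l rh} v : rule_lr r l rh -> lhs_prefix (l ++ v).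
Proof. by move=> hl; exists r, l, rh, v. Qed.

Lemma irreducible_nil : irreducible [::].
Proof. by apply/irreducibleP => [[|//]] l v r rh []. Qed.

Lemma irreducible_cons a w :
  irreducible (a :: w) <-> irreducible w /\ ~ lhs_prefix (a :: w).
Proof.
rewrite !irreducibleP; split=> [h | [hw hp] [|b u] l v r rh hl //= E].
- split=> [u l v r rh hl E | [r [l [rh [v [hl E]]]]]].
    by apply: (h (a :: u) l v r rh hl); rewrite E.
  exact: (h [::] l v r rh hl).
- by apply: hp; exists r, l, rh, v.
- by case: E => _; apply: hw hl.
Qed.

Lemma lhs_factor_xpow_cat {c w u l v r rh} : no_x_head w -> rule_lr r l rh ->
  xpow c ++ w = u ++ l ++ v -> exists u', w = u' ++ l ++ v.
Proof.
move=> hw hl; have [n [z [-> hz]]] := xpow_nseq c.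
elim: n u => [|n IH] [|b u] /=; [by exists [::] | by exists (b :: u) | | by case=> _ /IH].
case: hl hw hz => [a|e i _|e i _] hw hz; try by case=> hze _; move: hz; rewrite {}hze; case: e.
case=> <- {a}; case: n IH => [_ | n _ []]; last by case: z hz.
by move: hw => /[swap] /= ->; case: z hz.
Qed.

Lemma irreducible_xpow_cat c w : no_x_head w -> irreducible (xpow c ++ w) <-> irreducible w.
Proof.
move=> hw; rewrite !irreducibleP; split=> h u l v r rh hl E.
- by apply: (h (xpow c ++ u) l v r rh hl); rewrite E catA.
- by have [u' E'] := lhs_factor_xpow_cat hw hl E; exact: h hl E'.
Qed.

Lemma W0 a b : W 0 a b = xpow (a 0%N).
Proof. by rewrite /W cats0. Qed.

Lemma W_S n a b : W n.+1 a b = xpow (a n.+1) ++ ypow (b n.+1) :: W n a b.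
Proof. by rewrite /W -addn1 iotaD rev_cat /= add1n addn1. Qed.

Lemma no_x_head_ypow e w : no_x_head (ypow e :: w).
Proof. by case: e. Qed.

Lemma no_x_head_inv_ypow e w : no_x_head (Defs.inv (ypow e) :: w).
Proof. by case: e. Qed.

Lemma W_xpow_head n a b : exists t, [/\ W n a b = xpow (a n) ++ t, no_x_head t &
  forall c w, t = c :: w -> exists2 n', n = n'.+1 & c = ypow (b n)].
Proof.
case: n => [|n]; first by exists [::]; rewrite W0 cats0.
exists (ypow (b n.+1) :: W n a b); rewrite W_S no_x_head_ypow.
by split=> // c w [<- _]; exists n.
Qed.

(* The subword y^(b (k+1)) x^(a k) y^(b k) of [W _ a b] contains no left-hand
   side of a rule. *)
Definition reduced_at (a : nat -> int) (b : nat -> bool) k : bool :=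
  [&& ~~ (b k && (1 <= a k)), ~~ (~~ b k && (2 <= a k)) & (a k == 0) ==> (b k.+1 == b k)].

Lemma ypow_inv {e e'} : e != e' -> ypow e' = Defs.inv (ypow e).
Proof. by case: e; case: e'. Qed.

Lemma no_lhs_prefix_ypow_W n a b :
  ~ lhs_prefix (ypow (b n.+1) :: W n a b) <-> ((0 < n)%N -> reduced_at a b n).
Proof.
split=> [hp | h [r [l [rh [v [hl E]]]]]].
  case: n hp => // n hp _; rewrite /reduced_at; apply/and3P; split.
  - apply/negP => /andP [hb ha]; apply: hp.
    by rewrite W_S hb; have := lhs_prefixI (W n a b) (lr_y (b n.+2) ha); rewrite /= -catA.
  - apply/negP => /andP [hb ha]; apply: hp.
    have ha' : 1 <= a n.+1 - 1 by lia.
    have := lhs_prefixI (W n a b) (lr_yinv (b n.+2) ha').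
    by rewrite /= -catA subrK W_S (negbTE hb).
  - apply/implyP => /eqP ha; apply/negPn/negP => hb; apply: hp.
    by rewrite W_S ha (ypow_inv hb); exact: (lhs_prefixI _ (lr_free _)).
have [t [Et ht t_cons]] := W_xpow_head n a b; rewrite Et in E.
case: hl E => [c|e i hi|e i hi] /= [Ec E]; rewrite -?Ec -?catA in E.
- have [ha /t_cons [n' En Eb]] :=
    xpow_cat_inj (E : _ = xpow 0 ++ _) ht (no_x_head_inv_ypow _ _).
  have /and3P [_ _] : reduced_at a b n by apply: h; rewrite En.
  by rewrite ha eqxx /= => /eqP Eb'; move: Eb; rewrite Eb'; case: (b n).
- have [ha /esym /t_cons [n' En Eb]] := xpow_cat_inj (esym E) isT ht.
  have /and3P [/negP + _ _] : reduced_at a b n by apply: h; rewrite En.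
  by apply; rewrite -ha hi andbT; case: (b n) Eb.
- have [ha /esym /t_cons [n' En Eb]] := xpow_cat_inj (esym E) isT ht.
  have /and3P [_ /negP + _] : reduced_at a b n by apply: h; rewrite En.
  by apply; rewrite -ha (_ : 2 <= i + 1) ?andbT; [case: (b n) Eb | lia].
Qed.

Lemma irreducible_W n a b :
  irreducible (W n a b) <-> forall k, (0 < k < n)%N -> reduced_at a b k.
Proof.
elim: n => [|n IH].
  rewrite W0 -[xpow _]cats0 irreducible_xpow_cat //.
  by split=> [_ k | _]; [lia | exact: irreducible_nil].
rewrite W_S irreducible_xpow_cat ?no_x_head_ypow // irreducible_cons no_lhs_prefix_ypow_W IH.
split=> [[h1 h2] k /andP [hk0 hkn] | h].
- case: (ltngtP k n) => [hkn'|hnk|ek]; [apply: h1; lia | lia | by rewrite ek in hk0 *; exact: h2].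
- by split=> [k hk | hn]; apply: h; lia.
Qed.

Lemma reduced_at_eq a b a' b' k k' :
  a k = a' k' -> b k = b' k' -> b k.+1 = b' k'.+1 -> reduced_at a b k = reduced_at a' b' k'.
Proof. by rewrite /reduced_at => -> -> ->. Qed.

Lemma reduced_at_nonpos a b k : a k <= 0 -> (a k = 0 -> b k.+1 = b k) -> reduced_at a b k.
Proof.
move=> h h0; rewrite /reduced_at.
have -> : (1 <= a k) = false by lia.
have -> : (2 <= a k) = false by lia.
by rewrite !andbF /=; apply/implyP => /eqP /h0 ->.
Qed.

Lemma head_filter (T : Type) (p : pred T) (d : T) s : head d (filter p s) = nth d s (find p s).
Proof. by elim: s => //= x s IH; case: ifP. Qed.

Lemma mindex_spec n i :
  [/\ (mindex n i <= n)%N, forall j, (j < mindex n i)%N -> 0 < psum i j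
    & (mindex n i < n)%N -> psum i (mindex n i) <= 0].
Proof.
rewrite /mindex head_filter; set s := iota 0 n.+1; set P := (fun k => psum i k <= 0).
have Es j : (j <= n)%N -> nth n s j = j by move=> hj; rewrite nth_iota.
have before j : (j < find P s)%N -> (j <= n)%N -> 0 < psum i j.
  by move=> hjf hjn; have := before_find n hjf; rewrite Es // /P => /negbT; lia.
case: (ltnP (find P s) n.+1) => hf.
- rewrite Es; last lia.
  split=> [|j hj|_]; [lia | apply: before; lia |].
  have hP : has P s by rewrite has_find size_iota.
  by have := nth_find n hP; rewrite Es //; lia.
- rewrite nth_default ?size_iota //.
  by split=> [|j hj|]; [done | apply: before; lia | rewrite ltnn].
Qed.

Lemma psum0 i : psum i 0 = i 0%N.
Proof. by rewrite /psum big_nat1. Qed.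

Lemma psumS i k : psum i k.+1 = psum i k + i k.+1.
Proof. by rewrite /psum big_nat_recr. Qed.

(* [Wprefix N k a b] = x^(a N) y^(b N) ... x^(a (k+1)) y^(b (k+1)). *)
Fixpoint Wprefix (N k : nat) (a : nat -> int) (b : nat -> bool) : word :=
  if N is N'.+1 then
    if (N <= k)%N then [::] else xpow (a N) ++ ypow (b N) :: Wprefix N' k a b
  else [::].

Lemma Wprefix_id N a b : Wprefix N N a b = [::].
Proof. by case: N => //= N; rewrite leqnn. Qed.

Lemma W_split N k a b : (k <= N)%N -> W N a b = Wprefix N k a b ++ W k a b.
Proof.
elim: N => [|N IH] hk; first by move: hk; rewrite leqn0 => /eqP ->.
rewrite /=; case: ifP => h; first by have -> : k = N.+1 by lia.
by rewrite W_S IH -?catA //; lia.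
Qed.

Lemma Wprefix_S N k a b : (k < N)%N ->
  Wprefix N k a b = Wprefix N k.+1 a b ++ xpow (a k.+1) ++ [:: ypow (b k.+1)].
Proof.
elim: N => [//|N IH] hk /=.
case: (ltngtP k N) => h; last by rewrite h leqnn Wprefix_id.
- by rewrite !ifF ?IH -?catA //; lia.
- lia.
Qed.

Lemma Wprefix_ext N k a b a' b' :
  (forall j, (k < j <= N)%N -> a j = a' j /\ b j = b' j) ->
  Wprefix N k a b = Wprefix N k a' b'.
Proof.
elim: N => [|N IH] h //=; case: ifP => hk //.
have [-> ->] : a N.+1 = a' N.+1 /\ b N.+1 = b' N.+1 by apply: h; lia.
by rewrite IH // => j hj; apply: h; lia.
Qed.

Lemma Wprefix_shift N k a b : (0 < N)%N ->
  Wprefix N k.+1 a b = Wprefix N.-1 k (fun j => a j.+1) (fun j => b j.+1).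
Proof.
case: N => // N _; elim: N k => [|N IH] k //=.
by rewrite ltnS; case: ifP => // _; rewrite -IH.
Qed.

Lemma W_pred k a b : (0 < k)%N -> W k a b = xpow (a k) ++ ypow (b k) :: W k.-1 a b.
Proof. by case: k => // k _; rewrite W_S. Qed.

Lemma W_ext n a b a' b' : (forall j, (j <= n)%N -> a j = a' j /\ b j = b' j) ->
  W n a b = W n a' b'.
Proof.
elim: n => [|n IH] h; first by rewrite !W0; case: (h 0%N isT) => ->.
rewrite !W_S; case: (h n.+1 (leqnn _)) => -> ->; rewrite IH // => j hj; apply: h; lia.
Qed.

Definition incr0 (i : nat -> int) j : int := if j == 0%N then i 0%N + 1 else i j.

Section Stages.
Variables (n : nat) (i : nat -> int) (eps : nat -> bool).

(* [stage k] is gamma y after the y-rules of sizes s_0, ..., s_(k-1):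
   x^(i_n) y^(e_n) ... y^(e_(k+1)) x^(s_k) y x^(-s_(k-1)-1) y^(e_k) x^(i_(k-1))
   ... y^(e_1) x^(i_0+1). *)
Definition stage_tail k : word :=
  if k is k'.+1 then xpow (- psum i k' - 1) ++ ypow (eps k) :: W k' (incr0 i) eps else [::].

Definition stage k : word := Wprefix n k i eps ++ xpow (psum i k) ++ Y :: stage_tail k.

Lemma stage_tailE k : (0 < k)%N ->
  stage_tail k = xpow (- psum i k.-1 - 1) ++ ypow (eps k) :: W k.-1 (incr0 i) eps.
Proof. by case: k. Qed.

Lemma stage0 : stage 0 = W n i eps ++ [:: Y].
Proof. by rewrite /stage psum0 (W_split _ _ _ _ (leq0n n)) W0 -catA. Qed.

Lemma yderives_stage_tail p k :
  yderives (p ++ xpow (psum i k + 1) ++ stage_tail k) [::] (p ++ W k (incr0 i) eps).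
Proof.
case: k => [|k]; first by rewrite cats0 W0 psum0; exact: yderives_refl.
rewrite W_S (_ : incr0 i k.+1 = psum i k.+1 + 1 + (- psum i k - 1)).
  exact: yderives_xpow_cat_frame.
by rewrite /incr0 /= psumS; lia.
Qed.

Lemma yderives_stage_step {k} : (k < n)%N -> 0 < psum i k ->
  yderives (stage k) [:: psum i k] (stage k.+1).
Proof.
move=> hk hs; rewrite /stage (Wprefix_S _ _ _ _ hk) -!catA /=.
set P := Wprefix n k.+1 i eps; set s := psum i k; set e := eps k.+1.
set t := Y :: xpow (- s - 1) ++ ypow e :: xpow (s + 1) ++ stage_tail k.
set w1 := P ++ xpow (i k.+1) ++ xpow s ++ t; set w2 := P ++ xpow (psum i k.+1) ++ t.
have d1 : yderives (P ++ xpow (i k.+1) ++ ypow e :: xpow s ++ Y :: stage_tail k) [:: s] w1.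
  have hs1 : 1 <= s by rewrite /s; lia.
  by have := yderives_yrule_frame (P ++ xpow (i k.+1)) (stage_tail k) e _ hs1; rewrite -!catA.
have d2 : yderives w1 [::] w2 by rewrite /w2 psumS addrC; exact: yderives_xpow_cat_frame.
have d3 : yderives w2 [::] (P ++ xpow (psum i k.+1) ++ Y :: stage_tail k.+1).
  have := yderives_stage_tail (P ++ xpow (psum i k.+1) ++ Y :: xpow (- s - 1) ++ [:: ypow e]) k.
  by rewrite -!catA /= -!catA.
by have := yderives_trans d1 (yderives_trans d2 d3).
Qed.

Lemma yderives_stage k : (k <= n)%N -> (forall j, (j < k)%N -> 0 < psum i j) ->
  yderives (W n i eps ++ [:: Y]) [seq psum i j | j <- iota 0 k] (stage k).
Proof.
elim: k => [|k IH] hk hpos; first by rewrite stage0; exact: yderives_refl.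
have -> : iota 0 k.+1 = iota 0 k ++ [:: k] by rewrite -addn1 iotaD.
have h := IH (ltnW hk) (fun j hj => hpos j (ltnW hj)).
rewrite map_cat; exact: yderives_trans h (yderives_stage_step hk (hpos k (ltnSn k))).
Qed.
End Stages.

Definition catY_exp (i : nat -> int) k : int := if k is k'.+1 then i k' else 0.
Definition catY_sgn (eps : nat -> bool) k : bool := if k is k'.+2 then eps k'.+1 else true.

Lemma W_catY n i eps : W n i eps ++ [:: Y] = W n.+1 (catY_exp i) (catY_sgn eps).
Proof.
elim: n => [|n IH]; first by rewrite W_S !W0.
by rewrite W_S -catA /= IH [in RHS]W_S.
Qed.

Lemma irreducible_W_catY n i eps : irreducible (W n i eps) ->
  ((0 < n)%N -> i 0%N <= 0 /\ (i 0%N = 0 -> eps 1%N)) -> irreducible (W n i eps ++ [:: Y]).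
Proof.
move=> /irreducible_W hirr h0; rewrite W_catY; apply/irreducible_W => -[//|[|k]] hk.
- by have [hi hie] := h0 (ltac:(lia)); apply: reduced_at_nonpos => //= /hie.
- by rewrite (reduced_at_eq _ _ i eps _ k.+1) //; apply: hirr; lia.
Qed.

Lemma edge_on_T_catY g : irreducible (g ++ [:: Y]) -> edge_on_T g Y.
Proof. by move=> h; exists (g ++ [:: Y]), g, Y, [::]; do 2 split=> //; left; split=> //; exact: fe_refl. Qed.

Lemma edge_on_T_catYi u : irreducible (u ++ [:: Yi]) -> edge_on_T (u ++ [:: Yi]) Y.
Proof.
move=> h; exists (u ++ [:: Yi]), u, Yi, [::]; do 2 split=> //; right; split=> //.
by apply: fe_sym; have := fe_free u [::] Yi; rewrite -catA !cats0.
Qed.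

Lemma W_nf_shape {n i eps} : irreducible (W n i eps) -> ~ edge_on_T (W n i eps) Y ->
  (1 <= n)%N /\ 1 <= i 0%N.
Proof.
move=> hirr hT.
have hn : (1 <= n)%N.
  by case: n hirr hT => // hirr hT; exfalso; apply/hT/edge_on_T_catY/irreducible_W_catY.
split=> //; case: (lerP 1 (i 0%N)) => // hi0; exfalso; apply: hT.
case: (boolP ((i 0%N == 0) && ~~ eps 1%N)) => [/andP [/eqP h0 he] | hne].
- have E : W n i eps = (Wprefix n 1 i eps ++ xpow (i 1%N)) ++ [:: Yi].
    by rewrite (W_split _ 1) // W_S W0 h0 /= (negbTE he) -catA.
  by rewrite E; apply: edge_on_T_catYi; rewrite -E.
- apply/edge_on_T_catY/irreducible_W_catY => // _; split=> [|h0]; first lia.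
  by move: hne; rewrite h0 eqxx /=; case: (eps 1%N).
Qed.

Section Cases.
Variables (n : nat) (i : nat -> int) (eps : nat -> bool).
Local Notation m := (mindex n i).

Lemma a1_lt j : (j < m)%N -> a1 n i j = incr0 i j.
Proof. by rewrite /a1 /incr0 => hj; case: ifP => // _; rewrite hj. Qed.

Lemma a1_m : (0 < m)%N -> a1 n i m = - psum i m.-1 - 1.
Proof. by rewrite /a1 ltnn eqxx => /lt0n_neq0 /negbTE ->. Qed.

Lemma a1_m1 : a1 n i m.+1 = psum i m.
Proof. by rewrite /a1 /= ltnNge leqnSn /= (gtn_eqF (ltnSn m)) eqxx. Qed.

Lemma a1_gt j : (m.+1 < j)%N -> a1 n i j = i j.-1.
Proof.
by move=> hj; rewrite /a1 ifF ?ifF ?ifF ?ifF //; apply/negbTE; lia.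
Qed.

Lemma b1_le j : (j <= m)%N -> b1 n i eps j = eps j.
Proof. by rewrite /b1 => ->. Qed.

Lemma b1_m1 : b1 n i eps m.+1 = true.
Proof. by rewrite /b1 ltnn eqxx. Qed.

Lemma b1_gt j : (m.+1 < j)%N -> b1 n i eps j = eps j.-1.
Proof. by move=> hj; rewrite /b1 ifF ?ifF //; apply/negbTE; lia. Qed.

Lemma a2_lt j : (j < m)%N -> a2 n i j = incr0 i j.
Proof. by rewrite /a2 /incr0 => hj; case: ifP => // _; rewrite hj. Qed.

Lemma a2_m : (0 < m)%N -> a2 n i m = i m.+1 + i m - 1.
Proof. by rewrite /a2 ltnn eqxx => /lt0n_neq0 /negbTE ->. Qed.

Lemma a2_gt j : (m < j)%N -> a2 n i j = i j.+1.
Proof. by move=> hj; rewrite /a2 ifF ?ifF ?ifF //; apply/negbTE; lia. Qed.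

Lemma b2_le j : (j <= m)%N -> b2 n i eps j = eps j.
Proof. by rewrite /b2 => ->. Qed.

Lemma b2_gt j : (m < j)%N -> b2 n i eps j = eps j.+1.
Proof. by move=> hj; rewrite /b2 ifF //; apply/negbTE; lia. Qed.

Hypothesis hm0 : (0 < m)%N.

Lemma stage_case1 : stage n i eps m = W n.+1 (a1 n i) (b1 n i eps).
Proof.
have [hmn _ _] := mindex_spec n i.
rewrite (W_split _ m.+1) // Wprefix_shift // W_S a1_m1 b1_m1 (W_pred _ _ _ hm0) a1_m // b1_le //.
rewrite /stage (stage_tailE _ _ _ hm0); congr (_ ++ _ ++ _ :: _ ++ _ :: _).
- by apply: Wprefix_ext => j hj; rewrite a1_gt ?b1_gt //; lia.
- by apply: W_ext => j hj; rewrite a1_lt ?b1_le //; lia.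
Qed.

Hypothesis hirr : irreducible (W n i eps).

Lemma irreducible_case1 : (m == n) || (psum i m != 0) || eps m.+1 ->
  irreducible (W n.+1 (a1 n i) (b1 n i eps)).
Proof.
move=> hc; have [hmn hpos hle] := mindex_spec n i.
have /irreducible_W red := hirr.
apply/irreducible_W => k /andP [hk0 hkn]; case: (ltngtP k m) => [hkm | hmk | ->].
- rewrite (reduced_at_eq _ _ i eps _ k); first (apply: red; lia).
  + by rewrite a1_lt // /incr0 (negbTE (lt0n_neq0 hk0)).
  + by rewrite b1_le //; lia.
  + by rewrite b1_le.
- case: (eqVneq k m.+1) => [ek | hk1].
  + rewrite ek in hkn *; apply: reduced_at_nonpos; rewrite a1_m1; first by apply: hle; lia.
    move=> h0; rewrite b1_gt // b1_m1 /=.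
    by move: hc; rewrite h0 eqxx orbF (_ : (m == n) = false) //; lia.
  + rewrite (reduced_at_eq _ _ i eps _ k.-1); first (apply: red; lia).
    * by rewrite a1_gt //; lia.
    * by rewrite b1_gt //; lia.
    * by rewrite b1_gt ?prednK //; lia.
- have ha : a1 n i m < 0 by rewrite a1_m //; have := hpos m.-1; lia.
  by apply: reduced_at_nonpos => [|h0]; lia.
Qed.

Lemma W_case2 : (m < n)%N -> psum i m = 0 ->
  W n.-1 (a2 n i) (b2 n i eps) =
  Wprefix n m.+1 i eps ++ xpow (i m.+1 + (- psum i m.-1 - 1)) ++
    ypow (eps m) :: W m.-1 (incr0 i) eps.
Proof.
move=> hmn hs; have hn : (0 < n)%N by lia.
rewrite (W_split _ m) ?(W_pred _ _ _ hm0) ?a2_m ?b2_le // ?Wprefix_shift //; last lia.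
congr (_ ++ _ ++ _ :: _).
- by apply: Wprefix_ext => j hj; rewrite a2_gt ?b2_gt //; lia.
- by congr xpow; have := psumS i m.-1; rewrite prednK //; lia.
- by apply: W_ext => j hj; rewrite a2_lt ?b2_le //; lia.
Qed.

Lemma yderives_case2 : (m < n)%N -> psum i m = 0 -> ~~ eps m.+1 ->
  yderives (stage n i eps m) [::] (W n.-1 (a2 n i) (b2 n i eps)).
Proof.
move=> hmn hs he; rewrite W_case2 // /stage hs (Wprefix_S _ _ _ _ hmn) (negbTE he).
rewrite (stage_tailE _ _ _ hm0) -!catA.
set P := Wprefix n m.+1 i eps; set q := ypow (eps m) :: W m.-1 (incr0 i) eps.
have d1 := yderives_cancel (P ++ xpow (i m.+1)) Yi (xpow (- psum i m.-1 - 1) ++ q).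
have d2 := yderives_xpow_cat_frame P q (i m.+1) (- psum i m.-1 - 1).
by rewrite -!catA in d1; exact: yderives_trans d1 d2.
Qed.

Lemma irreducible_case2 : (m < n)%N -> psum i m = 0 -> ~~ eps m.+1 ->
  irreducible (W n.-1 (a2 n i) (b2 n i eps)).
Proof.
move=> hmn hs he; have [_ hpos _] := mindex_spec n i.
have /irreducible_W red := hirr.
apply/irreducible_W => k /andP [hk0 hkn]; case: (ltngtP k m) => [hkm | hmk | ek].
- rewrite (reduced_at_eq _ _ i eps _ k); first (apply: red; lia).
  + by rewrite a2_lt // /incr0 (negbTE (lt0n_neq0 hk0)).
  + by rewrite b2_le //; lia.
  + by rewrite b2_le.
- rewrite (reduced_at_eq _ _ i eps _ k.+1); first (apply: red; lia).
  + by rewrite a2_gt.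
  + by rewrite b2_gt.
  + by rewrite b2_gt //; lia.
- rewrite ek in hkn *.
  have /and3P [_ /negP hi1 _] : reduced_at i eps m.+1 by apply: red; lia.
  have him : i m = - psum i m.-1 by have := psumS i m.-1; rewrite prednK //; lia.
  have ha : a2 n i m < 0.
    rewrite a2_m // him; move: hi1; rewrite (negbTE he) /=; have := hpos m.-1; lia.
  by apply: reduced_at_nonpos => [|h0]; lia.
Qed.

Lemma nf_case1 : (m == n) || (psum i m != 0) || eps m.+1 ->
  is_nf (W n i eps ++ [:: Y]) (W n.+1 (a1 n i) (b1 n i eps)) /\
  yderives (W n i eps ++ [:: Y]) [seq psum i k | k <- iota 0 m] (W n.+1 (a1 n i) (b1 n i eps)).
Proof.
move=> hc; have [hmn hpos _] := mindex_spec n i.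
have d := yderives_stage n i eps _ hmn hpos; rewrite stage_case1 in d.
by split=> //; split; [exact: irreducible_case1 | exact: fe_sym (yderives_fequiv d)].
Qed.

Lemma nf_case2 : (m < n)%N -> psum i m = 0 -> ~~ eps m.+1 ->
  is_nf (W n i eps ++ [:: Y]) (W n.-1 (a2 n i) (b2 n i eps)) /\
  yderives (W n i eps ++ [:: Y]) [seq psum i k | k <- iota 0 m] (W n.-1 (a2 n i) (b2 n i eps)).
Proof.
move=> hmn hs he; have [_ hpos _] := mindex_spec n i.
have := yderives_trans (yderives_stage n i eps _ (ltnW hmn) hpos) (yderives_case2 hmn hs he).
rewrite cats0 => d.
by split=> //; split; [exact: irreducible_case2 | exact: fe_sym (yderives_fequiv d)].
Qed.

End Cases.

Lemma mindex_gt0 {n i} : (1 <= n)%N -> 1 <= i 0%N -> (0 < mindex n i)%N.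
Proof.
have [_ _] := mindex_spec n i; case: (mindex n i) => // /(_ _) h hn hi0.
by have := h hn; rewrite psum0; lia.
Qed.

Theorem lemma3p1 (gamma : word) (n : nat) (i : nat -> int) (eps : nat -> bool) :
  irreducible gamma ->
  ~ edge_on_T gamma Y ->
  gamma = W n i eps ->
  [/\ (1 <= n)%N, 1 <= i 0%N, (1 <= mindex n i)%N,
      (mindex n i == n) || (psum i (mindex n i) != 0) || eps (mindex n i).+1 ->
        is_nf (gamma ++ [:: Y]) (W n.+1 (a1 n i) (b1 n i eps)) /\
        exists ls, [/\ derives (gamma ++ [:: Y]) ls (W n.+1 (a1 n i) (b1 n i eps)),
                       no_yinv_rule ls &
                       yrule_sizes ls = [seq psum i k | k <- iota 0 (mindex n i)]]
    & (mindex n i < n)%N && (psum i (mindex n i) == 0) && ~~ eps (mindex n i).+1 ->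
        is_nf (gamma ++ [:: Y]) (W n.-1 (a2 n i) (b2 n i eps)) /\
        exists ls, [/\ derives (gamma ++ [:: Y]) ls (W n.-1 (a2 n i) (b2 n i eps)),
                       no_yinv_rule ls &
                       yrule_sizes ls = [seq psum i k | k <- iota 0 (mindex n i)]]].
Proof.
move=> hirr hT Egamma; subst gamma.
have [hn hi0] := W_nf_shape hirr hT.
have hm0 := mindex_gt0 hn hi0.
split=> //; first exact: nf_case1.
by case/andP => /andP [hmn /eqP hs] he; exact: nf_case2.
Qed.
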